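(* Let $n\ge 1$, let $f$ be the standard Gaussian density on $\mathbb{R}^n$, and let $\phi:\mathbb{R}^n\to\mathbb{R}_+$ be a non-negative measurable function with $E=\int \phi(\mathbf{x})f(\mathbf{x})\,\mathrm{d}\mathbf{x}\in(0,\infty)$. Let $g^*=\phi f/E$, and let $\mathbf{m}^*=\mathbb{E}_{g^*}(\mathbf{X})$ and $\Sigma^*=\mathrm{Var}_{g^*}(\mathbf{X})$ be the mean and covariance matrix of $g^*$ (assumed to exist, with $\Sigma^*$ symmetric positive definite). Let $(\lambda^*_i,\mathbf{d}^*_i)$, $i=1,\dots,n$, be eigenpairs of $\Sigma^*$ (i.e. $\Sigma^*\mathbf{d}^*_i=\lambda^*_i\mathbf{d}^*_i$, with $\mathbf{d}^*_1,\dots,\mathbf{d}^*_n$ an orthonormal basis of $\mathbb{R}^n$) ranked in increasing $\ell$-order, i.e. $\ell(\lambda^*_1)\le \cdots\le \ell(\lambda^*_n)$, where $\ell(x)=\log(x)-x+1$ for $x>0$. Then for every $1\le k\le n$, the solution $\Sigma^*_k$ of the minimization problem $$\Sigma^*_k=\arg\min\{D(g^*,g_{\mathbf{m}^*,\Sigma}) : \Sigma\in\mathcal{L}_{n,k}\}$$ is given by $$\Sigma^*_k=I_n+\sum_{i=1}^k(\lambda^*_i-1)\,\mathbf{d}^*_i(\mathbf{d}^*_i)^\top .$$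
   Context: For $\mathbf{m}\in\mathbb{R}^n$ and $\Sigma$ a symmetric positive definite $n\times n$ matrix, $g_{\mathbf{m},\Sigma}$ denotes the Gaussian density on $\mathbb{R}^n$ with mean $\mathbf{m}$ and covariance $\Sigma$. For densities $p,h$ with $p$ absolutely continuous with respect to $h$, the Kullback--Leibler divergence is $D(p,h)=\int \log\big(p(\mathbf{x})/h(\mathbf{x})\big)p(\mathbf{x})\,\mathrm{d}\mathbf{x}$. The set $\mathcal{L}_{n,k}$ is $$\mathcal{L}_{n,k}=\Big\{\sum_{i=1}^k(\alpha_i-1)\frac{\mathbf{d}_i\mathbf{d}_i^\top}{\|\mathbf{d}_i\|^2}+I_n : \alpha_1,\dots,\alpha_k>0,\ \mathbf{d}_1,\dots,\mathbf{d}_k\in\mathbb{R}^n\setminus\{0\}\text{ pairwise orthogonal}\Big\},$$ where $I_n$ is the $n\times n$ identity matrix. *)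

From HB Require Import structures.
From mathcomp Require Import all_boot all_order all_algebra.
From mathcomp Require Import all_classical all_reals all_analysis.
Set Implicit Arguments. Unset Strict Implicit. Unset Printing Implicit Defensive.
Import Order.TTheory GRing.Theory Num.Theory.
Local Open Scope ring_scope.

(* Iterated Lebesgue integral over R^n of a function with values in \bar R.
   For non-negative measurable functions this is (Tonelli) the integral
   against n-dimensional Lebesgue measure. *)
Fixpoint iint (R : realType) (n : nat) : ('cV[R]_n -> \bar R) -> \bar R :=
  match n with
  | 0 => fun f => f 0
  | m.+1 => fun f : 'cV[R]_m.+1 -> \bar R =>
      integral (@lebesgue_measure R) [set: R]
        (fun x : R => iint (fun v : 'cV[R]_m =>
           f (col_mx (const_mx x : 'cV[R]_1) v)))
  end.

Definition Rn_int (R : realType) (n : nat) (f : 'cV[R]_n -> \bar R) : \bar R :=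
  (iint (fun x => f^\+ x) - iint (fun x => f^\- x))%E.

(* Borel measurability of a real function on R^n (R^n carries the product
   sigma-algebra, i.e. the one generated by the coordinates). *)
Definition Rn_measurable (R : realType) (n : nat) (phi : 'cV[R]_n -> R) : Prop :=
  measurable_fun [set: n.-tuple R] (fun t => phi (\col_i tnth t i)).

Definition gauss (R : realType) (n : nat) (m : 'cV[R]_n) (S : 'M[R]_n)
    (x : 'cV[R]_n) : R :=
  (Num.sqrt ((2 * pi) ^+ n * \det S))^-1 *
  expR (- (((x - m)^T *m invmx S *m (x - m)) 0 0) / 2).

(* Kullback--Leibler divergence D(p,h) = \int log(p/h) p  (with 0 log 0 = 0,
   since ln 0 = 0 in mathcomp). *)
Definition KL (R : realType) (n : nat) (p h : 'cV[R]_n -> R) : \bar R :=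
  Rn_int (fun x => (ln (p x / h x) * p x)%:E).

Definition sqnorm (R : realType) (n : nat) (d : 'cV[R]_n) : R := (d^T *m d) 0 0.

Definition Lnk (R : realType) (n k : nat) (S : 'M[R]_n) : Prop :=
  exists (alpha : 'I_k -> R) (d : 'I_k -> 'cV[R]_n),
    [/\ forall i, 0 < alpha i,
        forall i, d i != 0,
        forall i j, i != j -> (d i)^T *m d j = 0 &
        S = \sum_(i < k) ((alpha i - 1) / sqnorm (d i)) *: (d i *m (d i)^T)
            + 1%:M].

Definition ell (R : realType) (x : R) : R := ln x - x + 1.

From HB Require Import structures.
From mathcomp Require Import all_boot all_order all_algebra.
From mathcomp Require Import all_classical all_reals all_analysis.
From mathcomp Require Import measurable_realfun.
From mathcomp Require Import lra ring zify.
Import Order.TTheory GRing.Theory Num.Theory.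
Local Open Scope ring_scope.
Set Implicit Arguments. Unset Strict Implicit. Unset Printing Implicit Defensive.

(* For S in L_{n,k}, write S = I + sum_t (alpha_t - 1) e_t e_t^T with (e_t) orthonormal.
   Then log det S = sum_t log alpha_t and S^-1 = I + sum_t (alpha_t^-1 - 1) e_t e_t^T, so
   D(g*, g_{m*,S}) = D(g*, g_{m*,I}) + J/2 with
   J = sum_t (log alpha_t + (alpha_t^-1 - 1) e_t^T Sigma* e_t); this identity, rather than a
   difference of divergences, is what is compared, since D(g*, g_{m*,I}) may be infinite.
   Minimizing over alpha_t gives J >= sum_t ell(e_t^T Sigma* e_t). Expanding e_t in the eigenbasis,
   e_t^T Sigma* e_t = sum_j c_tj^2 lambda*_j with sum_j c_tj^2 = 1, so concavity of ell gives
   J >= sum_j w_j ell(lambda*_j) with w_j = sum_t c_tj^2. By Bessel's inequality 0 <= w_j <= 1,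
   and sum_j w_j = k, so J is at least the sum of the k smallest ell(lambda*_j), which is the
   value of J at alpha_t = lambda*_t, e_t = d*_t (t <= k). *)

Section iterated_integral.
Variable R : realType.
Local Open Scope classical_set_scope.
Local Open Scope ereal_scope.

Definition col_of_tuple n (t : n.-tuple R) : 'cV[R]_n := \col_i tnth t i.

Lemma col_mx_of_tuple m (x : R) (t : m.-tuple R) :
  col_mx (const_mx x : 'cV[R]_1) (col_of_tuple t) = col_of_tuple [tuple of x :: t].
Proof.
apply/matrixP => i j; rewrite [RHS]mxE.
case: (splitP i) => [i0 Hi|i0 Hi].
  have -> : i = lshift m i0 by apply/val_inj.
  by rewrite col_mxEu mxE (tnth_nth x) (ord1 i0).
have -> : i = rshift 1 i0 by apply/val_inj.
by rewrite col_mxEd mxE /= !(tnth_nth x).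
Qed.

Definition Rn_emeasurable n (f : 'cV[R]_n -> \bar R) : Prop :=
  measurable_fun [set: n.-tuple R] (fun t => f (col_of_tuple t)).

Lemma iint_ge0 n (f : 'cV[R]_n -> \bar R) : (forall x, 0 <= f x) -> 0 <= iint f.
Proof.
elim: n f => [|n IH] f f0 /=; first exact: f0.
by apply: integral_ge0 => x _; apply: IH.
Qed.

Lemma measurable_iint m d (T : measurableType d) (f : T -> 'cV[R]_m -> \bar R) :
  (forall t v, 0 <= f t v) ->
  measurable_fun [set: T * m.-tuple R] (fun p => f p.1 (col_of_tuple p.2)) ->
  measurable_fun [set: T] (fun t => iint (f t)).
Proof.
elim: m d T f => [|m IH] d T f f0 mf /=.
  have -> : (fun t => f t 0%R) =
      (fun p : T * 0.-tuple R => f p.1 (col_of_tuple p.2)) \o (fun t => (t, [tuple])).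
    by apply/funext => t /=; congr f; apply/matrixP => -[].
  by apply: measurableT_comp mf _; apply: measurable_fun_pair.
pose g (q : T * R) (v : 'cV[R]_m) := f q.1 (col_mx (const_mx q.2 : 'cV[R]_1) v).
have mg : measurable_fun [set: T * R] (fun q => iint (g q)).
  apply: IH => [q v|]; first exact: f0.
  have -> : (fun p : (T * R) * m.-tuple R => g p.1 (col_of_tuple p.2)) =
      (fun p => f p.1 (col_of_tuple p.2)) \o
      (fun q : (T * R) * m.-tuple R => (q.1.1, [the m.+1.-tuple R of q.1.2 :: q.2])).
    by apply/funext => q; rewrite /g /= col_mx_of_tuple.
  apply: measurableT_comp mf _; apply: measurable_fun_pair.
    exact: measurableT_comp.
  by apply: measurable_cons; [apply: measurableT_comp|].
exact: (measurable_fun_fubini_tonelli_F (m2 := lebesgue_measure) _ mg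
  (fun q => iint_ge0 (fun v => f0 _ _))).
Qed.

Section iint_sections.
Variables (m : nat) (f : 'cV[R]_m.+1 -> \bar R).
Hypothesis mf : Rn_emeasurable f.

Lemma Rn_emeasurable_section (x : R) :
  Rn_emeasurable (fun v : 'cV[R]_m => f (col_mx (const_mx x : 'cV[R]_1) v)).
Proof.
rewrite /Rn_emeasurable; under eq_fun do rewrite col_mx_of_tuple.
by apply: (measurableT_comp mf); apply: measurable_cons.
Qed.

Lemma measurable_iint_section : (forall x, 0 <= f x) ->
  measurable_fun [set: R]
    (fun x => iint (fun v : 'cV[R]_m => f (col_mx (const_mx x : 'cV[R]_1) v))).
Proof.
move=> f0.
apply: (@measurable_iint m _ R (fun x v => f (col_mx (const_mx x : 'cV[R]_1) v))) => //.
under eq_fun do rewrite col_mx_of_tuple.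
apply: (measurableT_comp mf); exact: measurable_cons.
Qed.

End iint_sections.

Lemma iintD n (f g : 'cV[R]_n -> \bar R) :
  (forall x, 0 <= f x) -> (forall x, 0 <= g x) ->
  Rn_emeasurable f -> Rn_emeasurable g ->
  iint (fun x => f x + g x) = iint f + iint g.
Proof.
elim: n f g => [//|n IH] f g f0 g0 mf mg /=.
rewrite -ge0_integralD //; last 4 first.
- by move=> x _; apply: iint_ge0.
- exact: measurable_iint_section.
- by move=> x _; apply: iint_ge0.
- exact: measurable_iint_section.
by apply: eq_integral => x _; apply: IH => //; apply: Rn_emeasurable_section.
Qed.

Lemma iintZl n (f : 'cV[R]_n -> \bar R) (c : R) : (0 <= c)%R ->
  (forall x, 0 <= f x) -> Rn_emeasurable f ->
  iint (fun x => c%:E * f x) = c%:E * iint f.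
Proof.
elim: n f => [//|n IH] f c0 f0 mf /=.
rewrite -ge0_integralZl_EFin //; last 2 first.
- by move=> x _; apply: iint_ge0.
- exact: measurable_iint_section.
by apply: eq_integral => x _; apply: IH => //; apply: Rn_emeasurable_section.
Qed.

Lemma le_iint n (f g : 'cV[R]_n -> \bar R) :
  (forall x, 0 <= f x) -> (forall x, f x <= g x) ->
  Rn_emeasurable f -> Rn_emeasurable g -> iint f <= iint g.
Proof.
elim: n f g => [|n IH] f g f0 fg mf mg /=; first exact: fg.
have g0 x : 0 <= g x by apply: le_trans (fg x).
apply: ge0_le_integral => //.
- by move=> x _; apply: iint_ge0.
- exact: measurable_iint_section.
- exact: measurable_iint_section.
by move=> x _; apply: IH => //; apply: Rn_emeasurable_section.
Qed.

Lemma iint0 n : iint (fun _ : 'cV[R]_n => 0) = 0.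
Proof. by elim: n => [|n IH] //=; apply: integral0_eq. Qed.

End iterated_integral.

Section positive_negative_parts.
Variable R : realType.

Lemma max0_add_bounds (r s : R) :
  let pos t := Num.max t 0 in let neg t := Num.max (- t) 0 in
  [/\ pos (r + s) <= pos r + pos s, pos r <= pos (r + s) + neg s,
      neg (r + s) <= neg r + neg s, neg r <= neg (r + s) + pos s &
      pos (r + s) + neg r + neg s = neg (r + s) + pos r + pos s].
Proof.
have posE (t : R) : Num.max t 0 = (t + `|t|) / 2.
  by rewrite maxEle; case: (leP t 0) => t0; [rewrite ler0_norm|rewrite gtr0_norm]; lra.
have negE (t : R) : Num.max (- t) 0 = (`|t| - t) / 2.
  by rewrite maxEle oppr_le0; case: (leP 0 t) => t0;
    [rewrite ger0_norm|rewrite ltr0_norm]; lra.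
have := ler_normD r s; have := ler_normB (r + s) s; rewrite addrK.
by rewrite /= !negE !posE => *; split; lra.
Qed.

Local Open Scope ereal_scope.

(* [a, a'] and [b, b'] are the integrals of the positive and negative parts of
   [f + g] and [f], when those of [g] are finite, equal to [p] and [q]. *)
Lemma sube_shift (a a' b b' : \bar R) (p q : R) :
  0 <= a -> 0 <= a' -> 0 <= b -> 0 <= b' ->
  a <= b + p%:E -> b <= a + q%:E -> a' <= b' + q%:E -> b' <= a' + p%:E ->
  a + b' + q%:E = a' + b + p%:E -> a - a' = b - b' + (p - q)%:E.
Proof.
case: a => [a| |]; case: a' => [a'| |]; case: b => [b| |]; case: b' => [b'| |] //=.
by rewrite !lee_fin => _ _ _ _ _ _ _ _ [?]; congr EFin; lra.
Qed.

End positive_negative_parts.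

Section Rn_integral.
Variable R : realType.
Local Open Scope ereal_scope.

Lemma Rn_intE n (f : 'cV[R]_n -> R) : Rn_int (fun x => (f x)%:E) =
  iint (fun x => (f^\+ x)%:E) - iint (fun x => (f^\- x)%:E).
Proof. by rewrite /Rn_int (funerpos f) (funerneg f). Qed.

Lemma Rn_emeasurable_EFin n (f : 'cV[R]_n -> R) :
  Rn_measurable f -> Rn_emeasurable (fun x => (f x)%:E).
Proof. by move=> mf; apply/measurable_EFinP. Qed.

Lemma iint_EFin_ge0 n (f : 'cV[R]_n -> R) :
  (forall x, 0 <= f x)%R -> 0 <= iint (fun x => (f x)%:E).
Proof. by move=> f0; apply: iint_ge0 => x; rewrite lee_fin. Qed.

Lemma iintD_EFin n (f g : 'cV[R]_n -> R) :
  (forall x, 0 <= f x)%R -> (forall x, 0 <= g x)%R ->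
  Rn_measurable f -> Rn_measurable g ->
  iint (fun x => (f x + g x)%:E) = iint (fun x => (f x)%:E) + iint (fun x => (g x)%:E).
Proof.
move=> f0 g0 mf mg; under eq_fun do rewrite EFinD.
by rewrite iintD //; apply: Rn_emeasurable_EFin.
Qed.

Lemma iintZl_EFin n (f : 'cV[R]_n -> R) (c : R) : (0 <= c)%R ->
  (forall x, 0 <= f x)%R -> Rn_measurable f ->
  iint (fun x => (c * f x)%:E) = c%:E * iint (fun x => (f x)%:E).
Proof.
move=> c0 f0 mf; under eq_fun do rewrite EFinM.
by rewrite iintZl //; apply: Rn_emeasurable_EFin.
Qed.

Lemma le_iint_EFin n (f g : 'cV[R]_n -> R) :
  (forall x, 0 <= f x)%R -> (forall x, f x <= g x)%R ->
  Rn_measurable f -> Rn_measurable g ->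
  iint (fun x => (f x)%:E) <= iint (fun x => (g x)%:E).
Proof. by move=> f0 fg mf mg; apply: le_iint => //; apply: Rn_emeasurable_EFin. Qed.

Lemma Rn_int_fin n (f : 'cV[R]_n -> R) c : Rn_int (fun x => (f x)%:E) = c%:E ->
  exists p q, [/\ iint (fun x => (f^\+ x)%:E) = p%:E,
                  iint (fun x => (f^\- x)%:E) = q%:E & c = (p - q)%R].
Proof.
rewrite Rn_intE.
have := iint_EFin_ge0 (funrpos_ge0 f); have := iint_EFin_ge0 (funrneg_ge0 f).
case: (iint _) => [q| |]; case: (iint _) => [p| |] //= _ _ [<-].
by exists p, q.
Qed.

Lemma Rn_intD n (f g : 'cV[R]_n -> R) c : Rn_measurable f -> Rn_measurable g ->
  Rn_int (fun x => (g x)%:E) = c%:E ->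
  Rn_int (fun x => (f x + g x)%:E) = Rn_int (fun x => (f x)%:E) + c%:E.
Proof.
move=> mf mg /Rn_int_fin [p [q [gp gn ->]]].
pose h x := (f x + g x)%R.
have mh : Rn_measurable h by apply: measurable_funD.
have [mfp mfn] := (measurable_funrpos mf, measurable_funrneg mf).
have [mgp mgn] := (measurable_funrpos mg, measurable_funrneg mg).
have [mhp mhn] := (measurable_funrpos mh, measurable_funrneg mh).
have le2 (u v w : 'cV[R]_n -> R) : (forall x, 0 <= u x)%R ->
    (forall x, 0 <= v x)%R -> (forall x, 0 <= w x)%R ->
    (forall x, u x <= v x + w x)%R ->
    Rn_measurable u -> Rn_measurable v -> Rn_measurable w ->
    iint (fun x => (u x)%:E) <= iint (fun x => (v x)%:E) + iint (fun x => (w x)%:E).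
  move=> u0 v0 w0 uvw mu mv mw; rewrite -iintD_EFin //.
  by apply: le_iint_EFin => //; apply: measurable_funD.
have pw x : [/\ h^\+ x <= f^\+ x + g^\+ x, f^\+ x <= h^\+ x + g^\- x,
  h^\- x <= f^\- x + g^\- x, f^\- x <= h^\- x + g^\+ x &
  h^\+ x + f^\- x + g^\- x = h^\- x + f^\+ x + g^\+ x]%R.
  exact: max0_add_bounds.
rewrite !Rn_intE -/h; apply: sube_shift; rewrite -?gp -?gn;
  try (by apply: iint_EFin_ge0); try (by apply: le2 => // x; have [] := pw x).
rewrite -!iintD_EFin //; try (by move=> x; apply: addr_ge0);
  try (by apply: measurable_funD).
by congr iint; apply/funext => x; have [_ _ _ _ ->] := pw x.
Qed.

Lemma Rn_intZl n (g : 'cV[R]_n -> R) c a : Rn_measurable g ->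
  Rn_int (fun x => (g x)%:E) = c%:E ->
  Rn_int (fun x => (a * g x)%:E) = (a * c)%:E.
Proof.
move=> mg /Rn_int_fin [p [q [gp gn ->]]].
have [mgp mgn] := (measurable_funrpos mg, measurable_funrneg mg).
rewrite Rn_intE; have [a0|/ltW a0] := leP 0%R a.
  rewrite ge0_funrposM // ge0_funrnegM // !iintZl_EFin // gp gn.
  by rewrite -EFinB mulrBr.
rewrite le0_funrposM // le0_funrnegM // !iintZl_EFin ?oppr_ge0 // gp gn.
by congr EFin; ring.
Qed.

Lemma Rn_measurable_sum n (I : Type) (s : seq I) (G : I -> 'cV[R]_n -> R) :
  (forall i, Rn_measurable (G i)) -> Rn_measurable (fun x => \sum_(i <- s) G i x)%R.
Proof. exact: (@measurable_sum _ _ R setT I s (fun i t => G i (col_of_tuple t))). Qed.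

Lemma Rn_int_sum n (I : Type) (s : seq I) (G : I -> 'cV[R]_n -> R) (c : I -> R) :
  (forall i, Rn_measurable (G i)) ->
  (forall i, Rn_int (fun x => (G i x)%:E) = (c i)%:E) ->
  Rn_int (fun x => (\sum_(i <- s) G i x)%:E) = (\sum_(i <- s) c i)%:E.
Proof.
move=> mG hG; elim: s => [|i s IH].
  under eq_fun do rewrite big_nil.
  by rewrite big_nil Rn_intE /funrpos /funrneg oppr0 maxxx iint0 sube0.
under eq_fun do rewrite big_cons addrC.
rewrite (Rn_intD _ (mG i) (hG i)) ?IH ?big_cons 1?addrC //.
exact: Rn_measurable_sum.
Qed.

End Rn_integral.

Section rank_one.
Variable R : comUnitRingType.

Lemma det_1_add_rank1 n (u v : 'cV[R]_n) :
  \det (1%:M + u *m v^T) = 1 + (v^T *m u) 0 0.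
Proof.
pose A : 'M[R]_(n + 1) := block_mx 1%:M (- u) v^T 1%:M.
have LU : A = block_mx 1%:M 0 v^T 1%:M *m block_mx 1%:M (- u) 0 (1%:M + v^T *m u).
  rewrite mulmx_block ?mulmx1 ?mul1mx ?mul0mx ?mulmx0 ?addr0 ?add0r ?mulmxN.
  by rewrite /A addrCA addNr addr0.
have UL : A = block_mx (1%:M + u *m v^T) (- u) 0 1%:M *m block_mx 1%:M 0 v^T 1%:M.
  rewrite mulmx_block ?mulmx1 ?mul1mx ?mul0mx ?mulmx0 ?add0r ?addr0 ?mulNmx.
  by rewrite /A -addrA subrr addr0.
have := congr1 determinant UL; rewrite {1}LU !det_mulmx.
rewrite (det_lblock (1%:M : 'M[R]_n)) (det_ublock (1%:M : 'M[R]_n)) det_ublock.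
by rewrite !det1 !mul1r !mulr1 det_mx11 !mxE eqxx => <-.
Qed.

End rank_one.

Section orthonormal_families.
Variable R : realType.

Definition dot n (u v : 'cV[R]_n) : R := (u^T *m v) 0 0.

Definition is_orthonormal n k (e : 'I_k -> 'cV[R]_n) :=
  forall t u, dot (e t) (e u) = (t == u)%:R.

Definition Lmx n k (al : 'I_k -> R) (e : 'I_k -> 'cV[R]_n) : 'M[R]_n :=
  1%:M + \sum_t (al t - 1) *: (e t *m (e t)^T).

Lemma trmx_mul_dot n (u v : 'cV[R]_n) : u^T *m v = (dot u v)%:M.
Proof. exact: mx11_scalar. Qed.

Lemma dotE n (u v : 'cV[R]_n) : dot u v = \sum_i u i 0 * v i 0.
Proof. by rewrite /dot mxE; apply: eq_bigr => i _; rewrite mxE. Qed.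

Lemma dotC n (u v : 'cV[R]_n) : dot u v = dot v u.
Proof. by rewrite !dotE; apply: eq_bigr => i _; rewrite mulrC. Qed.

Lemma dotZl n a (u v : 'cV[R]_n) : dot (a *: u) v = a * dot u v.
Proof. by rewrite !dotE mulr_sumr; apply: eq_bigr => i _; rewrite !mxE mulrA. Qed.

Lemma dotZr n a (u v : 'cV[R]_n) : dot u (a *: v) = a * dot u v.
Proof. by rewrite dotC dotZl dotC. Qed.

Lemma dotBl n (u v w : 'cV[R]_n) : dot (u - v) w = dot u w - dot v w.
Proof. by rewrite !dotE -sumrB; apply: eq_bigr => i _; rewrite !mxE mulrBl. Qed.

Lemma dotBr n (u v w : 'cV[R]_n) : dot w (u - v) = dot w u - dot w v.
Proof. by rewrite dotC dotBl !(dotC w). Qed.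

Lemma dot_sumr n (I : Type) (s : seq I) (u : 'cV[R]_n) (a : I -> R)
    (w : I -> 'cV[R]_n) :
  dot u (\sum_(j <- s) a j *: w j) = \sum_(j <- s) a j * dot u (w j).
Proof.
rewrite dotE; under eq_bigr do rewrite summxE mulr_sumr.
rewrite exchange_big /=; apply: eq_bigr => j _.
by rewrite dotE mulr_sumr; apply: eq_bigr => i _; rewrite !mxE mulrCA.
Qed.

Definition quad n (M : 'M[R]_n) (u : 'cV[R]_n) : R := (u^T *m M *m u) 0 0.

Lemma quad_dot n (M : 'M[R]_n) u : quad M u = dot u (M *m u).
Proof. by rewrite /quad /dot mulmxA. Qed.

Lemma dot_ge0 n (u : 'cV[R]_n) : 0 <= dot u u.
Proof. by rewrite dotE sumr_ge0 // => i _; rewrite -expr2 sqr_ge0. Qed.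

Lemma dot_gt0 n (u : 'cV[R]_n) : u != 0 -> 0 < dot u u.
Proof.
move=> u0; rewrite lt_def dot_ge0 andbT; apply: contra u0; rewrite dotE => /eqP.
move=> /psumr_eq0P sq0; apply/eqP/matrixP => i j; rewrite (ord1 j) mxE.
by apply/eqP; rewrite -sqrf_eq0 expr2 sq0 // => l _; rewrite -expr2 sqr_ge0.
Qed.

Lemma dot_eq1_neq0 n (u : 'cV[R]_n) : dot u u = 1 -> u != 0.
Proof.
by move=> h; apply/eqP => u0; move: h; rewrite u0 /dot mulmx0 mxE => /eqP; rewrite eq_sym oner_eq0.
Qed.

Lemma orthonormal_expand n (d : 'I_n -> 'cV[R]_n) : is_orthonormal d ->
  forall v, v = \sum_j dot (d j) v *: d j.
Proof.
move=> od v; pose D : 'M[R]_n := \matrix_(i, j) d j i 0.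
have DtD : D^T *m D = 1%:M.
  by apply/matrixP => i j; rewrite !mxE -od dotE; apply: eq_bigr => l _; rewrite !mxE.
apply/matrixP => b c; rewrite (ord1 c).
have := congr1 (fun M => (M *m v) b 0) (mulmx1C DtD); rewrite mul1mx => <-.
rewrite -mulmxA mxE summxE; apply: eq_bigr => j _.
by rewrite !mxE dotE mulrC; congr (_ * _); apply: eq_bigr => l _; rewrite !mxE.
Qed.

Section Lmx_algebra.
Variables (n k : nat) (e : 'I_k -> 'cV[R]_n).
Hypothesis oe : is_orthonormal e.

Lemma proj_mul t u :
  e t *m (e t)^T *m (e u *m (e u)^T) = (t == u)%:R *: (e t *m (e u)^T).
Proof.
by rewrite mulmxA -(mulmxA (e t)) trmx_mul_dot oe mul_mx_scalar -scalemxAl.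
Qed.

Lemma Lmx_mul (al be : 'I_k -> R) :
  Lmx al e *m Lmx be e = Lmx (fun t => al t * be t) e.
Proof.
set P := fun t => e t *m (e t)^T.
have PP (a b : 'I_k -> R) : (\sum_t a t *: P t) *m (\sum_t b t *: P t) =
    \sum_t (a t * b t) *: P t.
  rewrite mulmx_suml; apply: eq_bigr => t _.
  rewrite mulmx_sumr (bigD1 t) //= big1 ?addr0 => [|u /negbTE tu].
    by rewrite -scalemxAl -scalemxAr proj_mul eqxx scale1r scalerA.
  by rewrite -scalemxAl -scalemxAr proj_mul eq_sym tu !scale0r !scaler0.
rewrite /Lmx mulmxDl !mulmxDr !mul1mx mulmx1 PP -!addrA; congr (_ + _).
rewrite addrA -!big_split /=; apply: eq_bigr => t _.
by rewrite -!scalerDl; congr (_ *: _); ring.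
Qed.

Lemma Lmx1 : Lmx (fun _ => 1) e = 1%:M.
Proof. by rewrite /Lmx big1 ?addr0 // => t _; rewrite subrr scale0r. Qed.

Lemma invmx_Lmx (al : 'I_k -> R) : (forall t, al t != 0) ->
  invmx (Lmx al e) = Lmx (fun t => (al t)^-1) e.
Proof.
move=> al0; have LL : Lmx al e *m Lmx (fun t => (al t)^-1) e = 1%:M.
  by rewrite Lmx_mul -Lmx1; congr Lmx; apply/funext => t; rewrite mulfV.
have [ua _] := mulmx1_unit LL.
by rewrite -[RHS]mul1mx -(mulVmx ua) -mulmxA LL mulmx1.
Qed.

End Lmx_algebra.

Lemma det_Lmx n k (al : 'I_k -> R) (e : 'I_k -> 'cV[R]_n) : is_orthonormal e ->
  \det (Lmx al e) = \prod_t al t.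
Proof.
elim: k al e => [|k IH] al e oe; first by rewrite /Lmx big_ord0 addr0 det1 big_ord0.
pose at_max (t : 'I_k.+1) (x y : R) := if t == ord_max then x else y.
have at_max_wid t : widen_ord (leqnSn k) t == ord_max = false.
  by apply/negbTE; rewrite neq_ltn /= ltn_ord.
have -> : Lmx al e =
    Lmx (fun t => at_max t 1 (al t)) e *m Lmx (fun t => at_max t (al t) 1) e.
  rewrite Lmx_mul //; congr Lmx; apply/funext => t.
  by rewrite /at_max; case: eqP; rewrite ?mul1r ?mulr1.
rewrite det_mulmx.
have -> : Lmx (fun t => at_max t 1 (al t)) e =
    Lmx (fun t : 'I_k => al (widen_ord (leqnSn k) t))
        (fun t : 'I_k => e (widen_ord (leqnSn k) t)).
  rewrite /Lmx big_ord_recr /= /at_max eqxx subrr scale0r addr0.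
  by congr (_ + _); apply: eq_bigr => t _; rewrite at_max_wid.
have -> : Lmx (fun t => at_max t (al t) 1) e =
    1%:M + ((al ord_max - 1) *: e ord_max) *m (e ord_max)^T.
  rewrite /Lmx big_ord_recr /= big1 ?add0r => [|t _]; last first.
    by rewrite /at_max at_max_wid subrr scale0r.
  by rewrite /at_max eqxx -scalemxAl.
rewrite IH => [|t u]; last by rewrite oe.
rewrite det_1_add_rank1 -scalemxAr mxE -/(dot _ _) oe eqxx mulr1 big_ord_recr /=.
by congr (_ * _); ring.
Qed.

End orthonormal_families.

Section ell_inequalities.
Variable R : realType.

Lemma ln_le_subr1 (y : R) : 0 < y -> ln y <= y - 1.
Proof. by move=> y0; have := @le_ln1Dx R (y - 1); rewrite addrCA subrr addr0; apply; lra. Qed.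

Lemma ell_le (al mu : R) : 0 < al -> 0 < mu -> ell mu <= ln al + (al^-1 - 1) * mu.
Proof.
move=> al0 mu0; have := ln_le_subr1 (divr_gt0 mu0 al0).
rewrite ln_div ?posrE // /ell mulrBl mul1r [_ * mu]mulrC; lra.
Qed.

Lemma ell_jensen (I : finType) (p x : I -> R) :
  (forall j, 0 <= p j) -> \sum_j p j = 1 -> (forall j, 0 < x j) ->
  \sum_j p j * ell (x j) <= ell (\sum_j p j * x j).
Proof.
move=> p0 p1 x0; set X := \sum_j p j * x j.
have X0 : 0 < X.
  rewrite lt0r sumr_ge0 ?andbT => [|j _]; last exact/mulr_ge0/ltW.
  have px0 j : 0 <= p j * x j by apply/mulr_ge0/ltW.
  apply: contra_neq (oner_neq0 R) => /(psumr_eq0P (fun j _ => px0 j)) pX0.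
  rewrite -p1 big1 // => j _.
  by have /eqP := pX0 j isT; rewrite mulf_eq0 (gt_eqF (x0 j)) orbF => /eqP.
(* [ell_le] with [al := X] bounds the concave [ell] by its tangent line at [X]. *)
apply: le_trans (ler_sum _ (fun j _ => ler_wpM2l (p0 j) (ell_le X0 (x0 j)))) _.
under eq_bigr do rewrite mulrDr mulrCA.
rewrite big_split /= -!mulr_suml -mulr_sumr p1 mul1r -/X /ell mulrBl mulVf ?gt_eqF //.
lra.
Qed.

Lemma sum_lt_le_weighted n k (L w : 'I_n -> R) : (0 < k <= n)%N ->
  {homo L : i j / (i <= j)%N >-> i <= j} ->
  (forall j, 0 <= w j <= 1) -> \sum_j w j = k%:R ->
  \sum_(j < n | (j < k)%N) L j <= \sum_j w j * L j.
Proof.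
move=> /andP[k0 kn] Lmono w01 wk.
have km1 : (k.-1 < n)%N by lia.
pose T := L (Ordinal km1).
pose ind (j : 'I_n) : R := if (j < k)%N then 1 else 0.
have indk : \sum_j ind j = k%:R.
  by rewrite -big_mkcond /= (big_ord_narrow kn) sumr_const card_ord.
have -> : \sum_(j < n | (j < k)%N) L j = \sum_j ind j * L j.
  by rewrite big_mkcond; apply: eq_bigr => j _; rewrite /ind; case: ifP; rewrite ?mul1r ?mul0r.
(* [T] separates the first [k] values of [L] from the others, so every
   [(w j - ind j) * (L j - T)] is nonnegative, while the [w j - ind j] sum to 0. *)
have step j : (w j - ind j) * T <= w j * L j - ind j * L j.
  have /andP[w0 w1] := w01 j; rewrite /ind; case: ifP => jk.
    have : L j <= T by apply: Lmono => /=; lia.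
    nra.
  have : T <= L j by apply: Lmono => /=; move: jk; lia.
  nra.
rewrite -subr_ge0 -sumrB; apply: le_trans (ler_sum _ (fun j _ => step j)).
by rewrite -mulr_suml sumrB wk indk subrr mul0r.
Qed.

End ell_inequalities.

Section orthonormal_coordinates.
Variable R : realType.

Lemma parseval n (d : 'I_n -> 'cV[R]_n) (v : 'cV[R]_n) : is_orthonormal d ->
  \sum_j dot (d j) v ^+ 2 = dot v v.
Proof.
move=> od; rewrite {3}(orthonormal_expand od v) dot_sumr.
by apply: eq_bigr => j _; rewrite expr2 dotC.
Qed.

Lemma bessel n k (e : 'I_k -> 'cV[R]_n) (v : 'cV[R]_n) : is_orthonormal e ->
  \sum_t dot v (e t) ^+ 2 <= dot v v.
Proof.
move=> oe; set c := fun t => dot v (e t).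
have cc : dot (\sum_t c t *: e t) (\sum_t c t *: e t) = \sum_t c t ^+ 2.
  rewrite dot_sumr; apply: eq_bigr => t _.
  rewrite dotC dot_sumr (bigD1 t) //= big1 ?addr0 => [|u /negbTE tu].
    by rewrite oe eqxx mulr1 expr2.
  by rewrite oe eq_sym tu mulr0.
have cv : dot (\sum_t c t *: e t) v = \sum_t c t ^+ 2.
  by rewrite dotC dot_sumr; apply: eq_bigr => t _; rewrite expr2.
have := dot_ge0 (v - \sum_t c t *: e t).
by rewrite dotBl !dotBr cc cv dotC cv; lra.
Qed.

Lemma quad_eigenbasis n (S : 'M[R]_n) (lam : 'I_n -> R) (d : 'I_n -> 'cV[R]_n)
    (v : 'cV[R]_n) :
  is_orthonormal d -> (forall j, S *m d j = lam j *: d j) ->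
  quad S v = \sum_j dot (d j) v ^+ 2 * lam j.
Proof.
move=> od heig; rewrite quad_dot {2}(orthonormal_expand od v) mulmx_sumr.
under eq_bigr do rewrite -scalemxAr heig scalerA.
by rewrite dot_sumr; apply: eq_bigr => j _; rewrite dotC expr2; ring.
Qed.

End orthonormal_coordinates.

Section kl_excess.
Variable R : realType.

Definition kl_excess n k (S : 'M[R]_n) (al : 'I_k -> R) (e : 'I_k -> 'cV[R]_n) : R :=
  \sum_t (ln (al t) + ((al t)^-1 - 1) * quad S (e t)).

Variables (n : nat) (S : 'M[R]_n) (lam : 'I_n -> R) (d : 'I_n -> 'cV[R]_n).
Hypotheses (S_pd : forall v, v != 0 -> 0 < quad S v) (od : is_orthonormal d)
  (heig : forall j, S *m d j = lam j *: d j).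

Lemma quad_eigenvector j : quad S (d j) = lam j.
Proof. by rewrite quad_dot heig dotZr od eqxx mulr1. Qed.

Lemma eigenvalue_gt0 j : 0 < lam j.
Proof. by rewrite -quad_eigenvector; apply/S_pd/dot_eq1_neq0; rewrite od eqxx. Qed.

Lemma kl_excess_eigenvectors k (f : 'I_k -> 'I_n) :
  kl_excess S (fun t => lam (f t)) (fun t => d (f t)) = \sum_t ell (lam (f t)).
Proof.
apply: eq_bigr => t _; rewrite quad_eigenvector mulrBl mulVf ?gt_eqF ?eigenvalue_gt0 //.
by rewrite /ell; ring.
Qed.

Lemma sum_ell_le_kl_excess k (al : 'I_k -> R) (e : 'I_k -> 'cV[R]_n) :
  {homo (fun j => ell (lam j)) : i j / (i <= j)%N >-> i <= j} -> (0 < k <= n)%N ->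
  is_orthonormal e -> (forall t, 0 < al t) ->
  \sum_(j < n | (j < k)%N) ell (lam j) <= kl_excess S al e.
Proof.
move=> ell_mono kn oe al0; pose c t j := dot (d j) (e t) ^+ 2.
have q0 t : 0 < quad S (e t) by apply/S_pd/dot_eq1_neq0; rewrite oe eqxx.
have ell_q t : \sum_j c t j * ell (lam j) <= ell (quad S (e t)).
  rewrite (quad_eigenbasis _ od heig); apply: ell_jensen => [j||j].
  - exact: sqr_ge0.
  - by rewrite parseval // oe eqxx.
  - exact: eigenvalue_gt0.
apply: le_trans (ler_sum _ (fun t _ => ell_le (al0 t) (q0 t))).
apply: le_trans (ler_sum _ (fun t _ => ell_q t)).
rewrite exchange_big /=; under [X in _ <= X]eq_bigr do rewrite -mulr_suml.
apply: sum_lt_le_weighted => // [j|].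
  rewrite sumr_ge0 => [|t _]; last exact: sqr_ge0.
  by apply: le_trans (bessel _ oe) _; rewrite od eqxx.
rewrite exchange_big /= (eq_bigr (fun=> 1)) => [|t _].
  by rewrite sumr_const card_ord.
by rewrite /c parseval // oe eqxx.
Qed.

End kl_excess.

Section gaussian_density.
Variable R : realType.

Definition mxdot n (B M : 'M[R]_n) : R := \sum_i \sum_j B i j * M i j.

Lemma quadE n (M : 'M[R]_n) (u : 'cV[R]_n) :
  quad M u = \sum_i \sum_j u i 0 * M i j * u j 0.
Proof.
rewrite /quad mxE exchange_big /=; apply: eq_bigr => i _.
by rewrite mxE mulr_suml; apply: eq_bigr => j _; rewrite !mxE.
Qed.

Lemma mxdot_sum_proj n k (a : 'I_k -> R) (e : 'I_k -> 'cV[R]_n) (M : 'M[R]_n) :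
  mxdot (\sum_t a t *: (e t *m (e t)^T)) M = \sum_t a t * quad M (e t).
Proof.
transitivity (\sum_t \sum_i \sum_j a t * (e t i 0 * M i j * e t j 0)); last first.
  by apply: eq_bigr => t _; rewrite quadE mulr_sumr; apply: eq_bigr => i _; rewrite mulr_sumr.
rewrite [RHS]exchange_big; apply: eq_bigr => i _ /=.
rewrite [RHS]exchange_big; apply: eq_bigr => j _ /=.
rewrite summxE mulr_suml; apply: eq_bigr => t _.
by rewrite !mxE big_ord1 !mxE; ring.
Qed.

Lemma quadBl n (M N : 'M[R]_n) (u : 'cV[R]_n) : quad (M - N) u = quad M u - quad N u.
Proof. by rewrite /quad mulmxBr mulmxBl !mxE. Qed.

Lemma Rn_measurable_coord n (i : 'I_n) : Rn_measurable (fun x : 'cV[R]_n => x i 0).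
Proof.
rewrite /Rn_measurable (_ : (fun t => _) = (fun t => tnth t i)).
  exact: measurable_tnth.
by apply/funext => t; rewrite mxE.
Qed.

Lemma Rn_measurable_quad n (M : 'M[R]_n) (m : 'cV[R]_n) :
  Rn_measurable (fun x => quad M (x - m)).
Proof.
rewrite /Rn_measurable; under eq_fun do rewrite quadE.
apply: measurable_sum => i; apply: measurable_sum => j.
have mB l : Rn_measurable (fun x : 'cV[R]_n => (x - m) l 0).
  rewrite (_ : (fun x => _) = (fun x : 'cV[R]_n => x l 0 - m l 0)).
    exact: measurable_funB (Rn_measurable_coord l) (measurable_cst _).
  by apply/funext => x; rewrite !mxE.
by apply: measurable_funM; [apply: measurable_funM|apply: mB]; [apply: mB|].
Qed.

Lemma Rn_measurable_gauss n (m : 'cV[R]_n) (A : 'M[R]_n) : Rn_measurable (gauss m A).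
Proof.
apply: measurable_funM => //; apply: measurableT_comp => //.
apply: measurable_funM => //; apply: measurableT_comp => //.
exact: Rn_measurable_quad.
Qed.

Definition gauss_lognc n (A : 'M[R]_n) : R := ln (Num.sqrt ((2 * pi) ^+ n * \det A)).

Lemma gauss_nc_gt0 n (A : 'M[R]_n) : 0 < \det A ->
  0 < Num.sqrt ((2 * pi) ^+ n * \det A).
Proof. by move=> A0; rewrite sqrtr_gt0 mulr_gt0 // exprn_gt0 // mulr_gt0 // pi_gt0. Qed.

Lemma gauss_gt0 n (m : 'cV[R]_n) A x : 0 < \det A -> 0 < gauss m A x.
Proof. by move=> A0; rewrite mulr_gt0 ?expR_gt0 // invr_gt0 gauss_nc_gt0. Qed.

Lemma ln_gauss n (m : 'cV[R]_n) A x : 0 < \det A ->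
  ln (gauss m A x) = - gauss_lognc A - quad (invmx A) (x - m) / 2.
Proof.
move=> A0; rewrite /gauss lnM ?posrE ?invr_gt0 ?gauss_nc_gt0 ?expR_gt0 //.
by rewrite lnV ?posrE ?gauss_nc_gt0 // expRK mulNr.
Qed.

Lemma ln_div_gauss_mul n (m : 'cV[R]_n) A x (y : R) : 0 < \det A -> 0 <= y ->
  ln (y / gauss m A x) * y = (ln y + gauss_lognc A + quad (invmx A) (x - m) / 2) * y.
Proof.
move=> A0; rewrite le0r => /orP[/eqP->|y0]; first by rewrite !mulr0.
by rewrite ln_div ?posrE ?gauss_gt0 // ln_gauss //; congr (_ * _); ring.
Qed.

Lemma Rn_measurable_KL_integrand n (m : 'cV[R]_n) A (f : 'cV[R]_n -> R) :
  0 < \det A -> (forall x, 0 <= f x) -> Rn_measurable f ->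
  Rn_measurable (fun x => ln (f x / gauss m A x) * f x).
Proof.
move=> A0 f0 mf; under eq_fun do rewrite ln_div_gauss_mul //.
apply: measurable_funM => //; apply: measurable_funD; last first.
  by apply: measurable_funM => //; apply: Rn_measurable_quad.
by apply: measurable_funD => //; apply: measurableT_comp mf.
Qed.

Lemma ln_prod (I : finType) (F : I -> R) : (forall i, 0 < F i) ->
  ln (\prod_i F i) = \sum_i ln (F i).
Proof.
move=> F0; apply: (proj2 (big_rec2 (fun x y => 0 < x /\ ln x = y) _ _)).
  by rewrite ln1.
by move=> i x y _ [x0 <-]; rewrite mulr_gt0 // lnM ?posrE.
Qed.

Lemma gauss_lognc_Lmx n k (al : 'I_k -> R) (e : 'I_k -> 'cV[R]_n) :
  is_orthonormal e -> (forall t, 0 < al t) ->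
  gauss_lognc (Lmx al e) = gauss_lognc (1%:M : 'M[R]_n) + (\sum_t ln (al t)) / 2.
Proof.
move=> oe al0; have pi0 : 0 < (2 * pi) ^+ n :> R by rewrite exprn_gt0 // mulr_gt0 // pi_gt0.
have ln_sqrt (y : R) : 0 < y -> ln (Num.sqrt y) = ln y / 2.
  by move=> y0; rewrite -{2}(sqr_sqrtr (ltW y0)) lnXn ?sqrtr_gt0 //; lra.
rewrite /gauss_lognc det_Lmx // det1 mulr1 !ln_sqrt ?mulr_gt0 ?prodr_gt0 //.
by rewrite lnM ?posrE ?prodr_gt0 // ln_prod //; lra.
Qed.

End gaussian_density.

Section kl_to_gaussians.
Variables (R : realType) (n : nat) (phi : 'cV[R]_n -> R) (E : R).
Variables (mstar : 'cV[R]_n) (Sstar : 'M[R]_n).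
Hypotheses (phi_ge0 : forall x, 0 <= phi x) (phi_meas : Rn_measurable phi).
Hypotheses (E_gt0 : 0 < E)
  (hE : Rn_int (fun x => (phi x * gauss 0 1%:M x)%:E) = E%:E).
Hypothesis hS : forall i j,
  Rn_int (fun x => ((x i 0 - mstar i 0) * (x j 0 - mstar j 0)
                    * (phi x * gauss 0 1%:M x / E))%:E) = (Sstar i j)%:E.

Let g x := phi x * gauss 0 1%:M x / E.

Let g_ge0 x : 0 <= g x.
Proof. by rewrite /g divr_ge0 ?(ltW E_gt0) // mulr_ge0 // ltW // gauss_gt0 // det1. Qed.

Let g_meas : Rn_measurable g.
Proof. by apply: measurable_funM => //; apply: measurable_funM => //; apply: Rn_measurable_gauss. Qed.

Let Rn_int_g : Rn_int (fun x => (g x)%:E) = 1%:E.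
Proof.
under eq_fun do rewrite /g mulrC.
by rewrite (Rn_intZl _ _ hE) ?mulVf ?gt_eqF //; apply: measurable_funM => //; apply: Rn_measurable_gauss.
Qed.

Let Rn_int_quad_centered (M : 'M[R]_n) :
  Rn_int (fun x => (quad M (x - mstar) * g x)%:E) = (mxdot M Sstar)%:E.
Proof.
pose H i j (x : 'cV[R]_n) := (x i 0 - mstar i 0) * (x j 0 - mstar j 0) * g x.
have mH i j : Rn_measurable (H i j).
  apply: measurable_funM => //.
  by apply: measurable_funM; apply: measurable_funB => //; apply: Rn_measurable_coord.
rewrite (_ : (fun x => _) = (fun x => (\sum_i \sum_j M i j * H i j x)%:E)); last first.
  apply/funext => x; rewrite quadE mulr_suml; congr EFin; apply: eq_bigr => i _.
  by rewrite mulr_suml; apply: eq_bigr => j _; rewrite /H !mxE; ring.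
have mMH i j : Rn_measurable (fun x => M i j * H i j x).
  exact: measurable_funM (measurable_cst _) (mH i j).
apply: Rn_int_sum => [i|i]; first exact: Rn_measurable_sum.
by apply: Rn_int_sum => // j; apply: Rn_intZl (mH i j) (hS i j).
Qed.

Lemma KL_gauss_shift (A B : 'M[R]_n) : 0 < \det A -> 0 < \det B ->
  KL g (gauss mstar B) = (KL g (gauss mstar A) +
    (gauss_lognc B - gauss_lognc A + mxdot (invmx B - invmx A) Sstar / 2)%:E)%E.
Proof.
move=> A0 B0; set D := invmx B - invmx A.
pose G x := (gauss_lognc B - gauss_lognc A) * g x + 2^-1 * (quad D (x - mstar) * g x).
have mqg : Rn_measurable (fun x => quad D (x - mstar) * g x).
  by apply: measurable_funM => //; apply: Rn_measurable_quad.
have IG : Rn_int (fun x => (G x)%:E) =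
    (gauss_lognc B - gauss_lognc A + mxdot D Sstar / 2)%:E.
  rewrite (Rn_intD _ _ (Rn_intZl _ mqg (Rn_int_quad_centered D))).
  - by rewrite (Rn_intZl _ _ Rn_int_g) // mulr1 mulrC.
  - exact: measurable_funM.
  - exact: measurable_funM.
rewrite /KL (_ : (fun x => _) = fun x => (ln (g x / gauss mstar A x) * g x + G x)%:E).
  rewrite (Rn_intD _ _ IG) //; last by apply: measurable_funD; apply: measurable_funM.
  exact: Rn_measurable_KL_integrand.
apply/funext => x; rewrite !ln_div_gauss_mul // /G /D quadBl; congr EFin; ring.
Qed.

Lemma KL_gauss_Lmx k (al : 'I_k -> R) (e : 'I_k -> 'cV[R]_n) :
  is_orthonormal e -> (forall t, 0 < al t) ->
  KL g (gauss mstar (Lmx al e)) =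
  (KL g (gauss mstar 1%:M) + (kl_excess Sstar al e / 2)%:E)%E.
Proof.
move=> oe al0; rewrite (KL_gauss_shift (A := 1%:M)) ?det1 ?det_Lmx ?prodr_gt0 //.
congr (_ + _%:E); rewrite gauss_lognc_Lmx // invmx1 invmx_Lmx // => [|t]; last first.
  by rewrite gt_eqF.
rewrite /Lmx [1%:M + _]addrC addrK mxdot_sum_proj /kl_excess big_split /=; lra.
Qed.

End kl_to_gaussians.

Section Lnk_parametrization.
Variables (R : realType) (n k : nat).

Lemma Lmx_Lnk (al : 'I_k -> R) (e : 'I_k -> 'cV[R]_n) :
  is_orthonormal e -> (forall t, 0 < al t) -> Lnk k (Lmx al e).
Proof.
move=> oe al0; exists al, e; split => // [t|t u tu|].
- by apply: dot_eq1_neq0; rewrite oe eqxx.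
- by rewrite trmx_mul_dot oe (negPf tu) raddf0.
rewrite /Lmx addrC; congr (_ + _); apply: eq_bigr => t _.
by rewrite /sqnorm -/(dot _ _) oe eqxx divr1.
Qed.

Lemma Lnk_Lmx (S : 'M[R]_n) : Lnk k S ->
  exists al e, [/\ is_orthonormal e, forall t : 'I_k, 0 < al t & S = Lmx al e].
Proof.
move=> [al [d [al0 d0 dd ->]]]; pose nd t := Num.sqrt (sqnorm (d t)).
have sq0 t : 0 < sqnorm (d t) by apply: dot_gt0.
have nd2 t : nd t ^+ 2 = sqnorm (d t) by rewrite sqr_sqrtr ?ltW.
exists al, (fun t => (nd t)^-1 *: d t); split => //.
  move=> t u; rewrite dotZl dotZr; have [<-|tu] := eqVneq t u.
    by rewrite -/(sqnorm _) mulrA -expr2 exprVn nd2 mulVf ?gt_eqF.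
  by rewrite /dot dd // mxE !mulr0.
rewrite /Lmx addrC; congr (_ + _); apply: eq_bigr => t _.
rewrite linearZ /= -scalemxAl -scalemxAr !scalerA; congr (_ *: _).
by rewrite -mulrA -expr2 exprVn nd2.
Qed.

End Lnk_parametrization.

Unset Implicit Arguments.

Theorem theorem1 (R : realType) (n : nat) (hn : (0 < n)%N)
  (phi : 'cV[R]_n -> R) (phi_ge0 : forall x, 0 <= phi x)
  (phi_meas : Rn_measurable phi)
  (E : R) (E_pos : 0 < E)
  (hE : Rn_int (fun x => (phi x * gauss 0 1%:M x)%:E) = E%:E)
  (mstar : 'cV[R]_n) (Sstar : 'M[R]_n)
  (hm : forall i, Rn_int (fun x => (x i 0 * (phi x * gauss 0 1%:M x / E))%:E)
                  = (mstar i 0)%:E)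
  (hS : forall i j,
      Rn_int (fun x => ((x i 0 - mstar i 0) * (x j 0 - mstar j 0)
                        * (phi x * gauss 0 1%:M x / E))%:E)
      = (Sstar i j)%:E)
  (hSpd : forall v : 'cV[R]_n, v != 0 -> 0 < (v^T *m Sstar *m v) 0 0)
  (lam : 'I_n -> R) (d : 'I_n -> 'cV[R]_n)
  (heig : forall i, Sstar *m d i = lam i *: d i)
  (horth : forall i j, (d i)^T *m d j = (i == j)%:R%:M)
  (hord : forall i j : 'I_n, (i <= j)%N -> ell (lam i) <= ell (lam j))
  (k : nat) (hk1 : (1 <= k)%N) (hkn : (k <= n)%N) :
  let gstar := fun x => phi x * gauss 0 1%:M x / E in
  let Sk := 1%:M + \sum_(i < n | (i < k)%N) (lam i - 1) *: (d i *m (d i)^T) in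
  Lnk k Sk /\
  (forall S : 'M[R]_n, Lnk k S ->
     (KL gstar (gauss mstar Sk) <= KL gstar (gauss mstar S))%E).
Proof.
move=> gstar Sk.
have od : is_orthonormal d by move=> i j; rewrite /dot horth mxE eqxx mulr1n.
have lam_gt0 := eigenvalue_gt0 hSpd od heig.
pose w := widen_ord hkn.
have odw : is_orthonormal (fun t => d (w t)) by move=> t u; rewrite od.
have -> : Sk = Lmx (fun t => lam (w t)) (fun t => d (w t)).
  by rewrite /Sk /Lmx (big_ord_narrow hkn).
split => [|S /Lnk_Lmx [al [e [oe al0 ->]]]]; first exact: Lmx_Lnk.
rewrite !(KL_gauss_Lmx phi_ge0 phi_meas E_pos hE hS) //.
apply: leeD2l; rewrite lee_fin ler_pM2r // kl_excess_eigenvectors //.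
rewrite -(big_ord_narrow hkn (F := fun j => ell (lam j))).
by apply: sum_ell_le_kl_excess => //; rewrite hk1 hkn.
Qed.
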